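(* Let $k$ be odd, $n=4k$, $d=\frac{(3^{2k}+1)^2}{20}$, $a\in\mathrm{GF}(3^n)^*$, and $r$ a nonsquare in $\mathrm{GF}(3^4)$. Regard $$q_1(x)=\mathrm{Tr}_1^n\big(a x^{3^{2(k+1)}+1}-x^{3^{2k}+1}\big),\qquad q_2(x)=\mathrm{Tr}_1^n\big(a r x^{3^{2(k+1)}+1}-r^{d}x^{3^{2k}+1}\big)$$ as quadratic forms in $n$ variables over $\mathrm{GF}(3)$ (via coordinates with respect to a basis of $\mathrm{GF}(3^n)$ over $\mathrm{GF}(3)$). Then the rank of $q_1$ is one of $n$, $n-2$, $n-4$, and the rank of $q_2$ equals $n$.
   Context: $\mathrm{Tr}_1^n(x)=x+x^3+\cdots+x^{3^{n-1}}$ is the absolute trace from $\mathrm{GF}(3^n)$ to $\mathrm{GF}(3)$. Writing $x=\sum_{i=1}^n x_i\alpha_i$ for a fixed basis $\{\alpha_1,\dots,\alpha_n\}$ of $\mathrm{GF}(3^n)$ over $\mathrm{GF}(3)$, each $q_j$ becomes a quadratic form in $x_1,\dots,x_n$ with coefficients in $\mathrm{GF}(3)$; its rank is the minimal number of variables it depends on after an invertible linear change of variables, equivalently $n-\dim_{\mathrm{GF}(3)}\{y: q_j(x+y)=q_j(x)\ \forall x\}$. *)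

From HB Require Import structures.
From mathcomp Require Import all_boot all_order all_algebra all_field.
Set Implicit Arguments. Unset Strict Implicit. Unset Printing Implicit Defensive.
Import GRing.Theory.
Local Open Scope ring_scope.

Definition tr3 (F : finFieldType) (n : nat) (x : F) : F :=
  \sum_(i < n) x ^+ (3 ^ i).

Definition qrad (F : finFieldType) (q : F -> F) : {set F} :=
  [set y | [forall x, q (x + y) == q x]].

(* Rank of q = n - dim_GF(3) (radical); the dimension of a finite
   GF(3)-subspace is log_3 of its cardinality. *)
Definition qrank (F : finFieldType) (n : nat) (q : F -> F) : nat :=
  (n - logn 3 #|qrad q|)%N.

(* For q(x) = Tr(c x^(3^i+1) - e x^(3^l+1)) with i + j = 2 l = n, the polar
   form of q is (x, y) |-> Tr(x L(y)) for the linearized polynomial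
     L(y) = c y^(3^i) + (c y)^(3^j) - e y^(3^l) - (e y)^(3^l),
   so by nondegeneracy of the trace form the radical is the kernel K of L
   (qrad_polar).  For (i, j, l) = (2k+2, 2k-2, 2k):
   - K is an additive subgroup of GF(3^n), so |K| is a power of 3;
   - K is stable under multiplication by a square root w of -1, which acts
     on K minus 0 with orbits of size 4, so 4 divides |K| - 1;
   - L(y)^9 is a polynomial of degree 81 in y^(3^(2k)), so |K| <= 81.
   Hence |K| is 1, 9 or 81 and rank(q1) is n, n-2 or n-4.  For q2 the choice
   e = r^d kills the middle coefficient e^9 + e^(3^(2k+2)) of L(y)^9, and a
   nonzero element of K then yields an 80th root of -1 in GF(3^(4k)), which
   does not exist for k odd; so K = 0 and rank(q2) = n.  The nonsquare r
   enters through Euler's criterion r^40 = -1 in GF(81), which also provides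
   the square root w = r^20 of -1. *)

From HB Require Import structures.
From mathcomp Require Import all_boot all_order all_algebra all_field.
From mathcomp Require Import all_fingroup cyclic ring zify.
Import GRing.Theory.
Set Implicit Arguments. Unset Strict Implicit. Unset Printing Implicit Defensive.
Local Open Scope ring_scope.

Lemma pow_eqN1_neq0 (R : nzRingType) (x : R) k : x ^+ k.+1 = -1 -> x != 0.
Proof.
by move=> xk; apply/eqP => x0; move/eqP: xk; rewrite x0 expr0n eq_sym oppr_eq0 oner_eq0.
Qed.

Lemma sqrtN1_frob9 (R : nzRingType) (w : R) : w ^+ 2 = -1 -> w ^+ (3 ^ 2) = w.
Proof.
move=> w2; rewrite (_ : (3 ^ 2 = 2 * 4 + 1)%N) // exprD exprM w2.
by rewrite -signr_odd expr0 mul1r expr1.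
Qed.

Section CharacteristicThree.

Variables (F : finFieldType) (char3 : 3%N \in [pchar F]).

Lemma frobD i (x y : F) : (x + y) ^+ (3 ^ i) = x ^+ (3 ^ i) + y ^+ (3 ^ i).
Proof.
by apply: exprDn_pchar; rewrite pnatX (pnatE _ (isT : prime 3)) char3.
Qed.

Lemma frobN i (x : F) : (- x) ^+ (3 ^ i) = - x ^+ (3 ^ i).
Proof. by rewrite exprNn -signr_odd oddX orbT expr1 mulN1r. Qed.

Lemma frobB i (x y : F) : (x - y) ^+ (3 ^ i) = x ^+ (3 ^ i) - y ^+ (3 ^ i).
Proof. by rewrite frobD frobN. Qed.

Lemma frob_comp (x : F) i j : (x ^+ (3 ^ i)) ^+ (3 ^ j) = x ^+ (3 ^ (i + j)).
Proof. by rewrite -exprM -expnD. Qed.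

Lemma two_neq0 : (2 : F) != 0.
Proof.
apply/eqP => two0; have : (1 : F) = 3%:R - 2 by ring.
by rewrite (pcharf0 char3) two0 subrr; apply/eqP; rewrite oner_eq0.
Qed.

Lemma no_root80_neg1 S : odd S -> #|F| = (80 * S + 1)%N -> forall t : F, t ^+ 80 != -1.
Proof.
move=> odd_S cardS t; apply/eqP => t80.
have t_neq0 := pow_eqN1_neq0 t80.
have t_80S : t ^+ (80 * S) = 1.
  by apply: (mulfI t_neq0); rewrite -exprS -addn1 -cardS expf_card mulr1.
move: t_80S; rewrite exprM t80 -signr_odd odd_S expr1 => /eqP.
apply/negP; apply: contra two_neq0 => /eqP m1.
by rewrite -[2]/(1 + 1 : F) -{1}m1 addNr.
Qed.

End CharacteristicThree.

Section Trace.

Variables (F : finFieldType) (char3 : 3%N \in [pchar F]) (n : nat).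
Hypothesis cardF : #|F| = (3 ^ n)%N.

Lemma frob_fix (x : F) : x ^+ (3 ^ n) = x.
Proof. by rewrite -cardF expf_card. Qed.

Lemma trD (u v : F) : tr3 n (u + v) = tr3 n u + tr3 n v.
Proof. by rewrite /tr3 -big_split; apply: eq_bigr => i _; rewrite frobD. Qed.

Lemma trN (u : F) : tr3 n (- u) = - tr3 n u.
Proof. by rewrite /tr3 -sumrN; apply: eq_bigr => i _; rewrite frobN. Qed.

Lemma tr0 : tr3 n (0 : F) = 0.
Proof. by rewrite /tr3 big1 // => i _; rewrite expr0n expn_eq0. Qed.

Lemma tr_cube (u : F) : tr3 n (u ^+ 3) = tr3 n u.
Proof.
case: n cardF => [|m] cardFm; first by rewrite /tr3 !big_ord0.
rewrite /tr3 big_ord_recr big_ord_recl /= -exprM -expnS -cardFm expf_card.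
rewrite expn0 expr1 addrC; congr (_ + _).
by apply: eq_bigr => i _; rewrite -exprM -expnS.
Qed.

Lemma tr_frob j (u : F) : tr3 n (u ^+ (3 ^ j)) = tr3 n u.
Proof. by elim: j => [|j IHj]; rewrite ?expr1 // expnSr exprM tr_cube. Qed.

(* The trace is not identically zero: as a polynomial of degree 3^(n-1) it
   cannot vanish on all 3^n elements of F. *)
Lemma tr_nonzero : exists x : F, tr3 n x != 0.
Proof.
case: n cardF => [|m] cardFm.
  by have := card_finNzRing_gt1 F; rewrite cardFm.
apply/existsP; apply: contraT => /existsPn trace0.
pose p : {poly F} := \sum_(i < m.+1) 'X^(3 ^ i).
have p_tr x : p.[x] = tr3 m.+1 x.
  by rewrite horner_sum; apply: eq_bigr => i _; rewrite hornerXn.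
have size_low :
    (size ((\sum_(i < m) 'X^(3 ^ i))%R : {poly F}) < size ('X^(3 ^ m) : {poly F}))%N.
  rewrite size_polyXn ltnS; apply: leq_trans (size_sum _ _ _) _.
  by apply/bigmax_leqP => i _; rewrite size_polyXn ltn_exp2l.
have size_p : size p = (3 ^ m).+1.
  by rewrite /p big_ord_recr /= addrC size_polyDl // size_polyXn.
have p_neq0 : p != 0 by rewrite -size_poly_eq0 size_p.
have all_roots : all (root p) (enum F).
  by apply/allP => x _; rewrite /root p_tr; have := trace0 x; rewrite negbK.
have := max_poly_roots p_neq0 all_roots (enum_uniq _).
by rewrite -cardE cardFm size_p ltnS leqNgt ltn_exp2l // ltnSn.
Qed.

Lemma tr_nondeg (c : F) : (forall x, tr3 n (x * c) = 0) -> c = 0.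
Proof.
move=> trc0; apply: contraTeq isT => c_neq0.
have [x0 trx0] := tr_nonzero.
by move: trx0; rewrite -(divfK c_neq0 x0) trc0 eqxx.
Qed.

Lemma tr_frob_adjoint i j (c x y : F) : (i + j)%N = n ->
  tr3 n (c * x ^+ (3 ^ i) * y) = tr3 n (x * (c * y) ^+ (3 ^ j)).
Proof.
move=> ijn; rewrite -(tr_frob j (c * x ^+ (3 ^ i) * y)).
by rewrite !exprMn frob_comp ijn frob_fix; congr (tr3 n _); ring.
Qed.

Section Radical.

Variables (i j l : nat) (c e : F) (q : F -> F).
Hypotheses (ijn : (i + j)%N = n) (lln : (l + l)%N = n).
Hypothesis qE : forall x, q x = tr3 n (c * x ^+ (3 ^ i + 1) - e * x ^+ (3 ^ l + 1)).

Definition polar (y : F) : F :=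
  c * y ^+ (3 ^ i) + (c * y) ^+ (3 ^ j) - e * y ^+ (3 ^ l) - (e * y) ^+ (3 ^ l).

Lemma qform_polar x y : q (x + y) = q x + q y + tr3 n (x * polar y).
Proof.
have cross : c * (x + y) ^+ (3 ^ i + 1) - e * (x + y) ^+ (3 ^ l + 1) =
    (c * x ^+ (3 ^ i + 1) - e * x ^+ (3 ^ l + 1))
    + (c * y ^+ (3 ^ i + 1) - e * y ^+ (3 ^ l + 1))
    + (c * x ^+ (3 ^ i) * y + x * (c * y ^+ (3 ^ i)))
    - (e * x ^+ (3 ^ l) * y + x * (e * y ^+ (3 ^ l))).
  by rewrite !addn1 !exprSr !frobD //; ring.
have polarE : x * polar y = x * (c * y ^+ (3 ^ i)) + x * (c * y) ^+ (3 ^ j)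
    - x * (e * y ^+ (3 ^ l)) - x * (e * y) ^+ (3 ^ l).
  by rewrite /polar; ring.
rewrite !qE cross polarE !(trD, trN) (tr_frob_adjoint _ _ _ ijn).
by rewrite (tr_frob_adjoint _ _ _ lln); ring.
Qed.

Lemma qrad_polar : qrad q = [set y | polar y == 0].
Proof.
have q0 : q 0 = 0 by rewrite qE !expr0n !addn1 /= !mulr0 subr0 tr0.
have qN y : q (- y) = q y.
  have neg_pow t : (- y) ^+ (3 ^ t + 1) = y ^+ (3 ^ t + 1).
    by rewrite exprNn -signr_odd oddD oddX orbT expr0 mul1r.
  by rewrite !qE !neg_pow.
apply/setP => y; rewrite !inE; apply/forallP/eqP => [rad_y | Ly0].
  have qy0 : q y = 0 by have /eqP := rad_y 0; rewrite add0r q0.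
  apply: tr_nondeg => x; have /eqP := rad_y x.
  rewrite qform_polar qy0 addr0 => /(congr1 (fun t => t - q x)).
  by rewrite addrAC !subrr add0r.
have qy0 : q y = 0.
  have := qform_polar (- y) y; rewrite addNr q0 Ly0 mulr0 tr0 addr0 qN => /esym qy2.
  have -> : q y = 3%:R * q y - (q y + q y) by ring.
  by rewrite (pcharf0 char3) qy2 mul0r subr0.
by move=> x; rewrite qform_polar Ly0 mulr0 tr0 qy0 !addr0.
Qed.

End Radical.

End Trace.

Section FourCycles.

Variables (T : finType) (f : T -> T).
Hypothesis f_inj : injective f.

Lemma order4 x : iter 4 f x = x -> iter 2 f x != x -> fingraph.order f x = 4%N.
Proof.
move=> f4x f2x; have fo := iter_order f_inj x.
have o_le4 : (fingraph.order f x <= 4)%N.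
  rewrite leqNgt; apply/negP => /findex_iter.
  by rewrite f4x findex0.
move: fo o_le4 (fingraph.order_gt0 f x).
case: (fingraph.order f x) => [|[|[|[|[|o]]]]] //= fox _ _.
- by move: f2x; rewrite /= fox fox eqxx.
- by move: f2x; rewrite /= fox eqxx.
- by move: f4x; rewrite /= fox => fx; move: f2x; rewrite /= fx fx eqxx.
Qed.

Lemma dvdn4_card (A : {pred T}) :
  (forall x, x \in A -> f x \in A) ->
  (forall x, x \in A -> iter 4 f x = x /\ iter 2 f x != x) -> (4 %| #|A|)%N.
Proof.
move=> fA A4; apply/dvdnP; exists (fcard f A); apply: esym.
apply: fcard_order_set => //.
  by apply/subsetP => x /A4 [f4x f2x]; rewrite inE order4.
by apply: intro_closed; [exact: fconnect_sym | move=> x y /eqP <-; apply: fA].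
Qed.

End FourCycles.

Section Arithmetic.

Local Open Scope nat_scope.

Lemma expn_mod1 a M t : 1 < M -> a %% M = 1 -> exists v, a ^ t = M * v + 1.
Proof.
move=> M_gt1 aM; exists (a ^ t %/ M).
have aMt : a ^ t %% M = 1 by rewrite -modnXm aM exp1n modn_small.
by rewrite {1}(divn_eq (a ^ t) M) aMt mulnC.
Qed.

Lemma odd_halfE k : odd k -> k = 2 * k./2 + 1.
Proof. by move=> ok; rewrite -{1}(odd_double_half k) ok add1n addn1 -mul2n. Qed.

Lemma pow3_4k k : odd k -> exists2 S, odd S & 3 ^ (4 * k) = 80 * S + 1.
Proof.
move/odd_halfE => ->; have [v ev] := @expn_mod1 6561 160 k./2 isT erefl.
exists (162 * v + 1); first by rewrite oddD oddM.
rewrite (_ : 4 * (2 * k./2 + 1) = 8 * k./2 + 4) 1?expnD ?expnM; last by lia.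
by rewrite (_ : 3 ^ 8 = 6561) // ev; lia.
Qed.

Lemma pow3_2k k : odd k -> exists u, 3 ^ (2 * k) = 720 * u + 9.
Proof.
move/odd_halfE => ->; have [u eu] := @expn_mod1 81 80 k./2 isT erefl.
exists u; rewrite (_ : 2 * (2 * k./2 + 1) = 4 * k./2 + 2) 1?expnD ?expnM; last by lia.
by rewrite (_ : 3 ^ 4 = 81) // eu; lia.
Qed.

Lemma eight_d_mod80 k : odd k -> 8 * ((3 ^ (2 * k) + 1) ^ 2 %/ 20) %% 80 = 40.
Proof.
move=> /pow3_2k [u ->].
have -> : (720 * u + 9 + 1) ^ 2 %/ 20 = 5 * (72 * u + 1) ^ 2.
  rewrite (_ : (720 * u + 9 + 1) ^ 2 = 5 * (72 * u + 1) ^ 2 * 20) ?mulnK //.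
  by rewrite !expnS expn0; lia.
have -> : 8 * (5 * (72 * u + 1) ^ 2) = (2592 * u * u + 72 * u) * 80 + 40.
  by rewrite !expnS expn0; lia.
by rewrite modnMDl.
Qed.

End Arithmetic.

Section PolarAlgebra.

Variables (F : finFieldType) (char3 : 3%N \in [pchar F]).
Implicit Types (c e w y z : F).

Lemma polar0 i j l c e : polar i j l c e 0 = 0.
Proof. by rewrite /polar !(mulr0, expr0n) !expn_eq0 /= !(mulr0, subr0, addr0). Qed.

Lemma polarD i j l c e y z :
  polar i j l c e (y + z) = polar i j l c e y + polar i j l c e z.
Proof. by rewrite /polar !mulrDr !frobD //; ring. Qed.

Lemma polar_scale i j l c e w y : w ^+ (3 ^ 2) = w ->
  polar (2 * i) (2 * j) (2 * l) c e (w * y) = w * polar (2 * i) (2 * j) (2 * l) c e y.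
Proof.
move=> w9; have w_fix t : w ^+ (3 ^ (2 * t)) = w.
  by elim: t => [|t IHt]; rewrite ?expr1 // mulnS expnD exprM w9 IHt.
by rewrite /polar !exprMn !w_fix; ring.
Qed.

Lemma polar_pow9 m c e y z : z = y ^+ (3 ^ (2 * m.+1)) ->
  polar (2 * (m.+1 + 1)) (2 * m) (2 * m.+1) c e y ^+ (3 ^ 2) =
  c ^+ (3 ^ 2) * z ^+ (3 ^ 4) + c ^+ (3 ^ (2 * m.+1)) * z
  - (e ^+ (3 ^ 2) + e ^+ (3 ^ (2 * (m.+1 + 1)))) * z ^+ (3 ^ 2).
Proof.
move=> ->; rewrite /polar !(frobB, frobD) // !exprMn !frob_comp.
have -> : (2 * (m.+1 + 1) + 2 = 2 * m.+1 + 4)%N by lia.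
have -> : (2 * m + 2 = 2 * m.+1)%N by lia.
have -> : (2 * m.+1 + 2 = 2 * (m.+1 + 1))%N by lia.
ring.
Qed.

End PolarAlgebra.

Section PolarKernel.

Variables (F : finFieldType) (char3 : 3%N \in [pchar F]) (m : nat).
Hypothesis cardF : #|F| = (3 ^ (4 * m.+1))%N.
Variables (c e : F).
Hypothesis c_neq0 : c != 0.

Definition polar_ker : {set F} :=
  [set y | polar (2 * (m.+1 + 1)) (2 * m) (2 * m.+1) c e y == 0].

(* K is an additive subgroup of F, so its order is a power of 3. *)
Lemma polar_ker_pow3 : exists t, #|polar_ker| = (3 ^ t)%N.
Proof.
have ker_group : group_set polar_ker.
  apply/group_setP; split; first by rewrite inE polar0.
  by move=> y z; rewrite !inE polarD // => /eqP -> /eqP ->; rewrite addr0.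
have := cardSg (subsetT (Group ker_group)); rewrite cardsT cardF.
by case/(dvdn_pfactor _ _ (isT : prime 3)) => t _ ->; exists t.
Qed.

(* L(y)^9 vanishes iff y^(3^(2m+2)) is a root of a nonzero polynomial of
   degree 81, and y |-> y^(3^(2m+2)) is injective: K has at most 81 elements. *)
Lemma polar_ker_le81 : (#|polar_ker| <= 81)%N.
Proof.
pose B := (3 ^ (2 * m.+1))%N.
have frob_inj : injective (fun y : F => y ^+ B).
  apply: (can_inj (g := fun y : F => y ^+ B)) => y; rewrite frob_comp.
  by rewrite -mulnDr addnn -mul2n mulnA -cardF expf_card.
pose b := e ^+ (3 ^ 2) + e ^+ (3 ^ (2 * (m.+1 + 1))).
pose p : {poly F} := c ^+ (3 ^ 2) *: 'X^(3 ^ 4) + (c ^+ B *: 'X - b *: 'X^(3 ^ 2)).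
have pE z : p.[z] = c ^+ (3 ^ 2) * z ^+ (3 ^ 4) + c ^+ B * z - b * z ^+ (3 ^ 2).
  by rewrite !(hornerD, hornerN, hornerZ, hornerXn, hornerX) addrA.
have size_low : (size ((c ^+ B *: 'X - b *: 'X^(3 ^ 2))%R : {poly F})
                 < size ((c ^+ (3 ^ 2) *: 'X^(3 ^ 4))%R : {poly F}))%N.
  rewrite size_scale ?expf_neq0 // size_polyXn.
  apply: leq_ltn_trans (size_polyD _ _) _; rewrite gtn_max size_polyN.
  by rewrite !(leq_ltn_trans (size_scale_leq _ _)) ?size_polyX ?size_polyXn.
have size_p : size p = 82%N.
  by rewrite size_polyDl // size_scale ?expf_neq0 // size_polyXn.
have p_neq0 : p != 0 by rewrite -size_poly_eq0 size_p.
pose Z := [set z | p.[z] == 0].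
have card_Z : (#|Z| <= 81)%N.
  have Z_roots : all (root p) (enum Z) by apply/allP => z; rewrite mem_enum inE.
  by have := max_poly_roots p_neq0 Z_roots (enum_uniq _); rewrite -cardE size_p.
apply: leq_trans card_Z; rewrite -(card_imset _ frob_inj); apply: subset_leq_card.
apply/subsetP => z /imsetP [y]; rewrite inE => /eqP Ly0 ->.
by rewrite /Z inE pE -(polar_pow9 char3 c e erefl) Ly0 expr0n.
Qed.

(* If w is a square root of -1, multiplication by w permutes the
   nonzero elements of K in orbits of size 4; with the two previous facts,
   |K| is 1, 9 or 81. *)
Lemma polar_ker_card (w : F) : w ^+ 2 = -1 -> #|polar_ker| \in [:: 1; 9; 81]%N.
Proof.
move=> w2; have w9 := sqrtN1_frob9 w2.
have ww y : w * (w * y) = - y by rewrite mulrA -expr2 w2 mulN1r.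
have w_neq0 := pow_eqN1_neq0 w2.
have dvd4 : (4 %| #|polar_ker :\ 0%R|)%N.
  apply: (dvdn4_card (mulfI w_neq0)) => y; rewrite !inE => /andP [y_neq0 Ly0].
    by rewrite mulf_neq0 //= polar_scale // (eqP Ly0) mulr0.
  split; first by rewrite /= !ww opprK.
  apply: contra (two_neq0 char3) => /eqP /= ny.
  have : 2 * y == 0 by rewrite mulr_natl mulr2n -{1}ny ww addNr.
  by rewrite mulf_eq0 (negbTE y_neq0) orbF.
have [t card_t] := polar_ker_pow3.
have dvd4t : (4 %| (3 ^ t).-1)%N.
  by rewrite -card_t (cardsD1 0%R polar_ker) inE polar0 eqxx add1n.
have le81 := polar_ker_le81; rewrite card_t in le81 *.
by case: t {card_t} dvd4t le81 => [|[|[|[|[|t]]]]] //; rewrite !expnS; lia.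
Qed.

(* In the quadratic case b = e^9 + e^(3^(2m+4)) = 0 the kernel is trivial:
   a nonzero z = y^(3^(2m+2)) would give an 80th root of -1 in F. *)
Lemma polar_ker_trivial : odd m.+1 ->
  e ^+ (3 ^ 2) + e ^+ (3 ^ (2 * (m.+1 + 1))) = 0 -> polar_ker = [set 0].
Proof.
move=> odd_k b0; apply/setP => y; rewrite !inE; apply/idP/idP; last first.
  by move/eqP ->; rewrite polar0.
pose z : F := y ^+ (3 ^ (2 * m.+1)).
move/eqP/(congr1 (fun x => x ^+ (3 ^ 2))).
rewrite (polar_pow9 char3 c e (erefl z)) b0 mul0r subr0 expr0n expn_eq0 /= => Lz0.
suff : z == 0 by rewrite /z expf_eq0 => /andP [_].
apply: contraT => z_neq0; have [u c_u] := pow3_2k odd_k.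
have [S odd_S cardS] := pow3_4k odd_k.
pose C := c ^+ (3 ^ 2 * u).
have C_neq0 : C != 0 by rewrite expf_neq0.
have factored : c ^+ (3 ^ 2) * z * (z ^+ 80 + C ^+ 80) = 0.
  have cE : c ^+ (3 ^ (2 * m.+1)) = c ^+ (3 ^ 2) * C ^+ 80.
    by rewrite c_u -exprM -exprD; congr (c ^+ _); rewrite (_ : 3 ^ 2 = 9)%N //; lia.
  have zE : z ^+ (3 ^ 4) = z ^+ 80 * z by rewrite -exprSr.
  by apply: etrans Lz0; rewrite cE zE; ring.
have z80 : z ^+ 80 = - C ^+ 80.
  have cz_neq0 : c ^+ (3 ^ 2) * z != 0 by rewrite mulf_neq0 // expf_neq0.
  by apply/eqP; rewrite -addr_eq0; move/eqP: factored; rewrite mulf_eq0 (negbTE cz_neq0).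
have := no_root80_neg1 char3 odd_S (etrans cardF cardS) (z / C).
by rewrite expr_div_n z80 mulNr divff ?expf_neq0 ?eqxx.
Qed.

End PolarKernel.

Section SubfieldGF81.

Variable F : finFieldType.

Lemma finField_prim_root : exists g : F, (#|F|.-1).-primitive_root g.
Proof.
pose units := enum [pred x : F | x != 0].
have card_gt0 : (0 < #|F|.-1)%N by rewrite -subn1 subn_gt0 card_finNzRing_gt1.
have units_roots : all (#|F|.-1).-unity_root units.
  apply/allP => x; rewrite mem_enum inE => x_neq0; apply/unity_rootP.
  apply: (mulfI x_neq0); rewrite -exprS prednK ?expf_card ?mulr1 //.
  exact: leq_trans (card_finNzRing_gt1 F).
have size_units : (#|F|.-1 <= size units)%N by rewrite -cardE (cardC1 (0 : F)).
have /hasP [g _ g_prim] := has_prim_root card_gt0 units_roots (enum_uniq _) size_units.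
by exists g.
Qed.

Lemma gf81_fix (x : F) t : x ^+ (3 ^ 4) = x -> x ^+ (3 ^ (4 * t)) = x.
Proof.
move=> x81; elim: t => [|t IHt]; first by rewrite expr1.
by rewrite mulnS expnD exprM x81 IHt.
Qed.

Lemma gf81_nonsquare S (r : F) : #|F| = (80 * S + 1)%N ->
  r ^+ (3 ^ 4) = r -> ~ (exists s : F, s ^+ (3 ^ 4) = s /\ s ^+ 2 = r) ->
  r ^+ 40 = -1.
Proof.
move=> cardS r81 nonsq.
have r_neq0 : r != 0 by apply/eqP => r0; apply: nonsq; exists 0; rewrite r0 !expr0n.
have r80 : r ^+ 80 = 1 by apply: (mulfI r_neq0); rewrite -exprS mulr1; exact: r81.
have /orP [/eqP r40 | /eqP //] : (r ^+ 40 == 1) || (r ^+ 40 == -1).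
  by rewrite -sqrf_eq1 -exprM r80.
have [g g_prim] := finField_prim_root; rewrite cardS addn1 /= in g_prim.
have r_80S : r ^+ (80 * S) = 1 by rewrite exprM r80 expr1n.
have [i ri] := prim_rootP g_prim r_80S.
have /dvdnP [x ix] : (80 * S %| i * 40)%N by rewrite (prim_order_dvd g_prim) exprM -ri r40.
exfalso; apply: nonsq; exists (g ^+ (S * x)); split.
  rewrite -exprM (_ : (S * x * 3 ^ 4 = S * x + 80 * S * x)%N); last by lia.
  by rewrite exprD [g ^+ (80 * S * x)]exprM (prim_expr_order g_prim) expr1n mulr1.
by rewrite ri -exprM; congr (g ^+ _); lia.
Qed.

(* For odd k, d = (3^(2k) + 1)^2 / 20 and r^40 = -1 in GF(81), the element
   e = r^d satisfies e^9 + e^(3^(2k+2)) = 0: indeed e^(3^(2k+2)) = e since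
   4 divides 2k + 2, while e^9 = r^(8d) e = -e since 8 d = 40 (mod 80). *)
Lemma gf81_frob_gap k (r : F) : odd k -> r ^+ (3 ^ 4) = r -> r ^+ 40 = -1 ->
  let e := r ^+ ((3 ^ (2 * k) + 1) ^ 2 %/ 20) in
  e ^+ (3 ^ 2) + e ^+ (3 ^ (2 * (k + 1))) = 0.
Proof.
move=> odd_k r81 r40; set d := (_ %/ 20)%N => e.
have r80 : r ^+ 80 = 1 by rewrite (_ : 80 = 40 * 2)%N // exprM r40 sqrrN expr1n.
have e81 : e ^+ (3 ^ 4) = e by rewrite -exprM mulnC exprM r81.
have -> : (2 * (k + 1) = 4 * (k./2 + 1))%N by rewrite {1}(odd_halfE odd_k); lia.
rewrite gf81_fix // -exprM (_ : (d * 3 ^ 2 = 8 * d + d)%N); last by lia.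
by rewrite exprD -(expr_mod _ r80) eight_d_mod80 // r40 mulN1r addNr.
Qed.

End SubfieldGF81.

Theorem mainTheorem5 (F : finFieldType) (k : nat) (a r : F) :
  odd k ->
  #|F| = (3 ^ (4 * k))%N ->
  a != 0 ->
  (* r lies in the subfield GF(3^4) of GF(3^n) and is a nonsquare there *)
  r ^+ (3 ^ 4) = r ->
  ~ (exists s : F, s ^+ (3 ^ 4) = s /\ s ^+ 2 = r) ->
  let n := (4 * k)%N in
  let d := ((3 ^ (2 * k) + 1) ^ 2 %/ 20)%N in
  let q1 := fun x : F =>
    tr3 n (a * x ^+ (3 ^ (2 * (k + 1)) + 1) - x ^+ (3 ^ (2 * k) + 1)) in
  let q2 := fun x : F =>
    tr3 n (a * r * x ^+ (3 ^ (2 * (k + 1)) + 1) - r ^+ d * x ^+ (3 ^ (2 * k) + 1)) in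
  qrank n q1 \in [:: n; (n - 2)%N; (n - 4)%N] /\ qrank n q2 = n.
Proof.
case: k => [//|m] odd_k cardF a_neq0 r81 nonsq n d q1 q2.
have char3 : 3%N \in [pchar F] := card_finPcharP cardF (isT : prime 3).
have [S _ cardS] := pow3_4k odd_k.
have r40 : r ^+ 40 = -1 := gf81_nonsquare (etrans cardF cardS) r81 nonsq.
have ijn : (2 * (m.+1 + 1) + 2 * m = n)%N by rewrite /n; lia.
have lln : (2 * m.+1 + 2 * m.+1 = n)%N by rewrite /n; lia.
split.
  have q1E x : q1 x = tr3 n (a * x ^+ (3 ^ (2 * (m.+1 + 1)) + 1)
                             - 1 * x ^+ (3 ^ (2 * m.+1) + 1)) by rewrite mul1r.
  rewrite /qrank (qrad_polar char3 cardF ijn lln q1E).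
  have w2 : (r ^+ 20) ^+ 2 = -1 by rewrite -exprM.
  have := polar_ker_card char3 cardF 1 a_neq0 w2.
  rewrite !inE => /or3P [] /eqP ->.
  - by rewrite logn1 subn0 eqxx.
  - by rewrite (pfactorK 2 (isT : prime 3)) eqxx orbT.
  - by rewrite (pfactorK 4 (isT : prime 3)) eqxx !orbT.
have q2E x : q2 x = tr3 n (a * r * x ^+ (3 ^ (2 * (m.+1 + 1)) + 1)
                           - r ^+ d * x ^+ (3 ^ (2 * m.+1) + 1)) by [].
rewrite /qrank (qrad_polar char3 cardF ijn lln q2E) -/(polar_ker m (a * r) (r ^+ d)).
rewrite polar_ker_trivial //.
- by rewrite cards1 logn1 subn0.
- by rewrite mulf_neq0 // (pow_eqN1_neq0 r40).
- exact: gf81_frob_gap.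
Qed.
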